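(* Let $1\le l\le k-1$ and $3\le t_1\le\cdots\le t_k$. Then $$S^{(k-l+1)}(t_{l+1},\dots,t_k)\le(\log2)^{-l}S^{(k+1)}(t_1,\dots,t_k)$$ and $S^{(k+1)}(t_1,\dots,t_k)\gg_k\log t_k$.
   Context: For $m\ge1$ and $1\le s_1\le\cdots\le s_m$, with $s_0=1$, let $\mathscr{P}_*^m(\mathbf{s})=\{\mathbf{a}\in\mathbb{N}^m: a_i\in\mathscr{P}_*(s_{i-1},s_i)\ (1\le i\le m)\}$, where $\mathscr{P}_*(y,z)$ is the set of squarefree positive integers with all prime factors in $(y,z]$. $L^{(m+1)}(\mathbf{a})$ is the $m$-dimensional Lebesgue measure of $\bigcup[\log(d_1/2),\log d_1)\times\cdots\times[\log(d_m/2),\log d_m)$ over all $(d_1,\dots,d_m)\in\mathbb{N}^m$ with $d_1\cdots d_i\mid a_1\cdots a_i$ for all $1\le i\le m$. $S^{(m+1)}(\mathbf{s})=\sum_{\mathbf{a}\in\mathscr{P}_*^m(\mathbf{s})}L^{(m+1)}(\mathbf{a})/(a_1\cdots a_m)$. *)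

From HB Require Import structures.
From mathcomp Require Import all_boot all_order all_algebra.
From mathcomp Require Import all_classical all_reals all_analysis.
Set Implicit Arguments. Unset Strict Implicit. Unset Printing Implicit Defensive.
Import Order.TTheory GRing.Theory Num.Theory.
Local Open Scope classical_set_scope.
Local Open Scope ring_scope.

Section Defs.
Variable R : realType.

Definition squarefree (n : nat) : bool :=
  (0 < n)%N && all (fun p => logn p n <= 1)%N (primes n).

Definition Pstar (y z : R) (n : nat) : bool :=
  squarefree n && all (fun p => (y < p%:R) && (p%:R <= z)) (primes n).

(* P_*^m(s) with s = [:: s_1; ...; s_m] and the convention s_0 = 1 *)
Definition Pstar_m (s : seq R) : set (seq nat) :=
  [set a | size a = size s /\
     forall i, (i < size s)%N -> Pstar (nth 1 (1 :: s) i) (nth 0 s i) (nth 0%N a i)].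

(* m-dimensional Lebesgue measure of a set A of points of R^m (points are
   sequences of length m), computed as the iterated Lebesgue integral of the
   indicator function of A (Fubini/Tonelli). *)
Fixpoint vol (m : nat) (A : seq R -> Prop) : \bar R :=
  match m with
  | 0 => (if pselect (A [::]) then 1 else 0)%E
  | m'.+1 => (\int[@lebesgue_measure R]_x vol m' (fun v => A (x :: v)))%E
  end.

Definition Lset (a : seq nat) : seq R -> Prop :=
  fun x => size x = size a /\
    exists d : seq nat, [/\ size d = size a, all (fun di => 0 < di)%N d,
      (forall i, (i < size a)%N ->
         (\prod_(e <- take i.+1 d) e) %| (\prod_(e <- take i.+1 a) e))%N &
      forall i, (i < size a)%N ->
         ln ((nth 0%N d i)%:R / 2) <= nth 0 x i /\ nth 0 x i < ln (nth 0%N d i)%:R].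

Definition Lm (a : seq nat) : \bar R := vol (size a) (Lset a).

Definition Sm (s : seq R) : \bar R :=
  (\esum_(a in Pstar_m s) (Lm a * ((\prod_(e <- a) e)%:R^-1)%:E))%E.

End Defs.

(* Splitting the first coordinate a_1 of a tuple in P_*^(k-l)(t_(l+1), ..., t_k)
   into its parts with prime factors in (1, t_1], (t_1, t_2], ..., (t_l, t_(l+1)]
   injects P_*^(k-l)(t_(l+1), ..., t_k) into P_*^k(t_1, ..., t_k), preserving
   the product a_1 ... a_m.  In each new coordinate the divisor d_i = 1 already
   contributes the interval [-log 2, 0), so L grows by at least a factor
   (log 2)^l; this is the first inequality.  For the second, taking l = k - 1
   leaves S^(2)(t_k) >= log 2 * sum_(s <= t_k squarefree) 1/s.  Writing every
   n <= t_k as s m^2 with s squarefree, the harmonic sum, which exceeds log t_k,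
   is at most this sum times sum_m 1/m^2 <= 2. *)

From HB Require Import structures.
From mathcomp Require Import all_boot all_order all_algebra zify ring lra.
From mathcomp Require Import all_classical all_reals all_analysis.
Set Implicit Arguments. Unset Strict Implicit. Unset Printing Implicit Defensive.
Import Order.TTheory GRing.Theory Num.Theory.
Local Open Scope classical_set_scope.
Local Open Scope ring_scope.

Section integral_nonmeasurable.
Local Open Scope ereal_scope.
Context d (T : measurableType d) (R : realType) (mu : {measure set T -> \bar R}).

(* [vol] integrates functions that need not be measurable, so [ge0_le_integral]
   does not apply; the supremum defining the integral is monotone anyway. *)
Lemma ge0_le_integralT (f g : T -> \bar R) :
  (forall x, 0 <= f x) -> (forall x, f x <= g x) ->
  \int[mu]_x f x <= \int[mu]_x g x.
Proof.
move=> f0 fg; have g0 x : 0 <= g x by exact: le_trans (f0 x) (fg x).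
rewrite !ge0_integralE // !patch_setT.
apply: ereal_sup_le => _ [h hf <-]; exists h => //= x.
exact: le_trans (hf x) (fg x).
Qed.

End integral_nonmeasurable.

Section volume.
Local Open Scope ereal_scope.
Variable R : realType.
Implicit Types (A B : seq R -> Prop) (D : set R).

Lemma vol_ge0 m A : 0 <= vol m A.
Proof.
elim: m A => [|m IH] A /=; first by case: pselect.
by apply: integral_ge0 => x _; exact: IH.
Qed.

Lemma le_vol m A B : (forall v, A v -> B v) -> vol m A <= vol m B.
Proof.
elim: m A B => [|m IH] A B AB /=.
  case: pselect => a; case: pselect => b //; first by case: (b (AB _ a)).
  by rewrite lee01.
apply: ge0_le_integralT => x; first exact: vol_ge0.
by apply: IH => v /AB.
Qed.

Lemma vol_set0 m : vol m (set0 : set (seq R)) = 0.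
Proof.
elim: m => [|m IH] /=; first by case: pselect.
by rewrite IH integral0.
Qed.

Fixpoint cyl (l : nat) D B (x : seq R) : Prop :=
  if l is l'.+1 then
    if x is h :: x' then D h /\ cyl l' D B x' else False
  else B x.

Lemma cylP l D B x : cyl l D B x ->
  exists y z, [/\ x = y ++ z, size y = l, forall i, (i < l)%N -> D (nth 0%R y i) & B z].
Proof.
elim: l x => [|l IH] [|h x] //=.
- by move=> Bx; exists [::], [::].
- by move=> Bx; exists [::], (h :: x).
case=> Dh /IH [y [z [-> sy Dy Bz]]]; exists (h :: y), z; split => //=.
- by rewrite sy.
- by case=> [|i] //= /Dy.
Qed.

Lemma vol_cyl l m D B (c : R) : measurable D -> lebesgue_measure D = c%:E ->
  vol (l + m) (cyl l D B) = (c ^+ l)%:E * vol m B.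
Proof.
move=> mD muD; elim: l => [|l IH]; first by rewrite expr0 mul1e.
rewrite addSn /=.
have -> : (fun x => vol (l + m) (fun v => D x /\ cyl l D B v)) =
          (cst (vol (l + m) (cyl l D B))) \_ D.
  apply/funext => x; rewrite /patch; case: ifPn => [/set_mem Dx | /negP Dx].
    by congr vol; apply/funext => v; apply/propext; split => [[]|].
  rewrite [RHS](_ : _ = 0) // -(vol_set0 (l + m)); congr vol; apply/funext => v;
  by apply/propext; split => // -[/mem_set].
rewrite -integral_mkcond integral_cst // [X in _ * X]muD IH.
by rewrite muleAC -EFinM -exprSr.
Qed.

End volume.

Section Lset_cyl.
Variable R : realType.

Definition ln2_itv : set R := [set` `[- ln (2 : R), 0[].

Lemma ln2_gt0 : 0 < ln (2 : R).
Proof. by rewrite ln_gt0 // ltr1n. Qed.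

Lemma lebesgue_measure_ln2_itv : lebesgue_measure ln2_itv = (ln (2 : R))%:E.
Proof.
by rewrite lebesgue_measure_itv /= lte_fin oppr_lt0 ln2_gt0 /= add0e opprK.
Qed.

Lemma prod_take_cat_nseq1 l (d : seq nat) n :
  (\prod_(e <- take n (nseq l 1%N ++ d)) e = \prod_(e <- take (n - l) d) e)%N.
Proof.
elim: l n => [|l IH] n; first by rewrite subn0.
case: n => [|n]; first by rewrite sub0n !take0.
by rewrite /= big_cons IH mul1n subSS.
Qed.

Lemma cyl_Lset_sub l (a b : seq nat) (x : seq R) : size b = (l + size a)%N ->
  (forall j, (j < size a)%N ->
     \prod_(e <- take j.+1 a) e %| \prod_(e <- take (l + j).+1 b) e)%N ->
  cyl l ln2_itv (Lset a) x -> Lset b x.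
Proof.
move=> sb dv /cylP [y [z [-> sy Iy [sz [d [sd pd dd id]]]]]].
split; first by rewrite size_cat sy sz sb.
exists (nseq l 1%N ++ d); split.
- by rewrite size_cat size_nseq sd sb.
- by rewrite all_cat pd andbT all_nseq orbT.
- move=> i; rewrite sb => ilt; rewrite prod_take_cat_nseq1.
  have [il|li] := ltnP i l.
    have -> : (i.+1 - l = 0)%N by lia.
    by rewrite take0 big_nil dvd1n.
  have jlt : (i - l < size a)%N by lia.
  have -> : (i.+1 - l = (i - l).+1)%N by lia.
  by apply: dvdn_trans (dd _ jlt) _; have := dv _ jlt; rewrite subnKC.
- move=> i; rewrite sb => ilt; rewrite !nth_cat size_nseq sy.
  case: ifPn => il; last by apply: id; lia.
  rewrite nth_nseq il mul1r ln1 lnV ?posrE //.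
  by move: (Iy _ il); rewrite /ln2_itv /= in_itv /= => /andP [].
Qed.

End Lset_cyl.

Lemma squarefree_dvd d n : (0 < d)%N -> (d %| n)%N -> squarefree n -> squarefree d.
Proof.
rewrite /squarefree => -> dn /andP [n0 /allP sqn] /=; apply/allP => p pd.
have pn : p \in primes n.
  move: pd; rewrite !mem_primes => /and3P [pp _ pdd].
  by rewrite pp n0 (dvdn_trans pdd dn).
exact: leq_trans (dvdn_leq_log p n0 dn) (sqn p pn).
Qed.

Lemma squarefree_decomp n : (0 < n)%N ->
  exists s m, [/\ squarefree s, (0 < m)%N & n = s * m ^ 2]%N.
Proof.
elim/ltn_ind: n => n IH n0.
case sq: (squarefree n); first by exists n, 1%N; rewrite muln1.
move: sq; rewrite /squarefree n0 /= => /negbT /allPn [p pn].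
rewrite -ltnNge => lp.
have pp : prime p by move: pn; rewrite mem_primes => /andP [].
have dv : (p ^ 2 %| n)%N by rewrite pfactor_dvdn.
have p2 : (1 < p ^ 2)%N by rewrite (ltn_exp2l 0) // prime_gt1.
have n'0 : (0 < n %/ p ^ 2)%N by rewrite divn_gt0 ?expn_gt0 ?prime_gt0 // dvdn_leq.
have [s [m [ss m0 E]]] := IH _ (ltn_Pdiv p2 n0) n'0.
exists s, (m * p)%N; split => //; first by rewrite muln_gt0 m0 prime_gt0.
by rewrite -(divnK dv) E expnMn mulnA.
Qed.

Section split_parts.
Variable R : realType.
Implicit Types (y z t : R) (ts : seq R).

Definition below t : nat_pred := [pred p : nat | p%:R <= t].

Lemma Pstar_part_below y z t n : Pstar y z n -> Pstar y t (n`_(below t))%N.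
Proof.
rewrite /Pstar => /andP [sq /allP yz]; apply/andP; split.
  by apply: squarefree_dvd sq; [exact: part_gt0 | exact: dvdn_part].
apply/allP => p; rewrite primes_part mem_filter => /andP [pt pn].
by have /andP [-> _] := yz p pn.
Qed.

Lemma Pstar_part_above y z t n : Pstar y z n -> Pstar t z (n`_(negn (below t)))%N.
Proof.
rewrite /Pstar => /andP [sq /allP yz]; apply/andP; split.
  by apply: squarefree_dvd sq; [exact: part_gt0 | exact: dvdn_part].
apply/allP => p; rewrite primes_part mem_filter => /andP [pt pn].
have /andP [_ ->] := yz p pn; rewrite andbT.
by move: pt; rewrite !inE -real_ltNge ?num_real.
Qed.

Fixpoint split_parts ts n : seq nat :=
  if ts is t :: ts' then (n`_(below t))%N :: split_parts ts' (n`_(negn (below t)))%N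
  else [:: n].

Lemma size_split_parts ts n : size (split_parts ts n) = (size ts).+1.
Proof. by elim: ts n => [|t ts IH] n //=; rewrite IH. Qed.

Lemma prod_split_parts ts n : (0 < n)%N -> (\prod_(e <- split_parts ts n) e)%N = n.
Proof.
elim: ts n => [|t ts IH] n n0 /=; first by rewrite big_seq1.
by rewrite big_cons IH ?part_gt0 // partnC.
Qed.

Lemma Pstar_split_parts ts y z n : Pstar y z n -> forall i, (i <= size ts)%N ->
  Pstar (nth y (y :: ts) i) (nth z (rcons ts z) i) (nth 0%N (split_parts ts n) i).
Proof.
elim: ts y n => [|t ts IH] y n Pn [|i] //= ilt.
  exact: Pstar_part_below Pn.
rewrite (set_nth_default t y) ?size_rcons //.
exact: IH (Pstar_part_above t Pn) _ ilt.
Qed.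

End split_parts.

Section refine_head.
Variable R : realType.
Implicit Types (ts : seq R) (a b : seq nat).

Definition refine_head ts a : seq nat := split_parts ts (head 0%N a) ++ behead a.

Lemma size_refine_head ts a : (0 < size a)%N ->
  size (refine_head ts a) = (size ts + size a)%N.
Proof. by case: a => [|h r] //= _; rewrite size_cat size_split_parts /=; lia. Qed.

Lemma prod_refine_head ts a : (0 < head 0%N a)%N ->
  (\prod_(e <- refine_head ts a) e = \prod_(e <- a) e)%N.
Proof. by case: a => [|h r] //= h0; rewrite big_cat prod_split_parts // big_cons. Qed.

Lemma prod_take_refine_head ts a j : (0 < head 0%N a)%N -> (j < size a)%N ->
  (\prod_(e <- take (size ts + j).+1 (refine_head ts a)) e =
   \prod_(e <- take j.+1 a) e)%N.
Proof.
case: a => [|h r] //= h0 jlt.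
rewrite /refine_head /= take_cat size_split_parts ltnNge ltnS leq_addr /=.
have -> : ((size ts + j).+1 - (size ts).+1 = j)%N by lia.
by rewrite big_cat /= prod_split_parts // big_cons.
Qed.

Lemma refine_head_inj ts a b : (0 < head 0%N a)%N -> (0 < size a)%N ->
  (0 < head 0%N b)%N -> (0 < size b)%N -> refine_head ts a = refine_head ts b -> a = b.
Proof.
case: a => [|h r] //= h0 _; case: b => [|h' r'] //= h0' _; rewrite /refine_head /= => E.
have := congr1 (drop (size ts).+1) E; rewrite !drop_size_cat ?size_split_parts // => ->.
have := congr1 (take (size ts).+1) E; rewrite !take_size_cat ?size_split_parts //.
by move=> /(congr1 (fun s => \prod_(e <- s) e)%N); rewrite !prod_split_parts // => ->.
Qed.

Lemma Pstar_m_head_gt0 (s : seq R) a : (0 < size s)%N -> Pstar_m s a ->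
  (0 < head 0%N a)%N /\ (0 < size a)%N.
Proof.
move=> s0 [sa Ha]; split; last by rewrite sa.
have := Ha 0%N s0; rewrite /Pstar /squarefree => /andP [/andP [+ _] _].
by case: a sa {Ha}.
Qed.

Lemma Pstar_m_refine_head (t : seq R) l a : (l < size t)%N -> Pstar_m (drop l t) a ->
  Pstar_m t (refine_head (take l t) a).
Proof.
move=> lt [sa Ha].
have sd : size (drop l t) = (size t - l)%N by rewrite size_drop.
have stl : size (take l t) = l by rewrite size_takel // ltnW.
case: a sa Ha => [|h r] sa Ha; first by move: sa; rewrite sd /=; lia.
split; first by rewrite size_cat size_split_parts stl /=; move: sa; rewrite sd /=; lia.
move=> i it; rewrite /refine_head nth_cat size_split_parts stl /=.
case: ifPn => il.
  have Ph : Pstar 1 (nth 0 (drop l t) 0) h by apply: (Ha 0%N); rewrite sd; lia.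
  have := Pstar_split_parts (ts := take l t) Ph; rewrite stl => /(_ i il).
  have -> : nth 1 (1 :: take l t) i = nth 1 (1 :: t) i.
    by move: il; case: (i) => [|i0] //= il; rewrite nth_take.
  suff -> : nth (nth 0 (drop l t) 0) (rcons (take l t) (nth 0 (drop l t) 0)) i = nth 0 t i by [].
  rewrite nth_rcons stl; case: ltnP => il2.
    by rewrite nth_take // (set_nth_default 0) // size_take; case: ltnP.
  have -> : i = l by lia.
  by rewrite eqxx nth_drop addn0.
have [j ij] : exists j, i = (l + j.+1)%N by exists (i - l.+1)%N; lia.
have jlt : (j.+1 < size (drop l t))%N by rewrite sd; lia.
subst i.
have := Ha _ jlt.
have -> : (l + j.+1 - l.+1 = j)%N by lia.
by rewrite /= !nth_drop addnS.
Qed.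

End refine_head.

Section esum_lemmas.
Local Open Scope ereal_scope.
Context (R : realType) (T : choiceType).
Implicit Types (I J : set T) (f : T -> \bar R).

Lemma le_esum_subset I J f : I `<=` J -> \esum_(i in I) f i <= \esum_(i in J) f i.
Proof.
move=> IJ; apply: ge_ereal_sup => _ [X [finX XI]] <-.
by apply: esum_ge; exists X => //; split => //; exact: subset_trans IJ.
Qed.

Lemma ge0_esumZl_le I (c : R) f : (0 <= c)%R -> (forall x, 0 <= f x) ->
  \esum_(i in I) (c%:E * f i) <= c%:E * \esum_(i in I) f i.
Proof.
move=> c0 f0; apply: ge_ereal_sup => _ [X [finX XI]] <-.
rewrite -ge0_mule_fsumr //; apply: lee_wpmul2l; first by rewrite lee_fin.
by apply: esum_ge; exists X.
Qed.

End esum_lemmas.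

Section Sm_drop.
Local Open Scope ereal_scope.
Variable R : realType.

Definition Sm_term (a : seq nat) : \bar R := Lm R a * (((\prod_(e <- a) e)%:R)^-1)%:E.

Lemma Sm_term_ge0 a : 0 <= Sm_term a.
Proof. by apply: mule_ge0; [exact: vol_ge0 | rewrite lee_fin invr_ge0 ler0n]. Qed.

Lemma Lm_refine_head (ts : seq R) a : (0 < head 0 a)%N -> (0 < size a)%N ->
  ((ln (2 : R)) ^+ size ts)%:E * Lm R a <= Lm R (refine_head ts a).
Proof.
move=> h0 s0; rewrite /Lm size_refine_head //.
rewrite -(vol_cyl _ _ _ (measurable_itv _) (lebesgue_measure_ln2_itv R)).
apply: le_vol => x; apply: cyl_Lset_sub; first by rewrite size_refine_head.
by move=> j jlt; rewrite prod_take_refine_head.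
Qed.

Lemma Sm_drop_le (t : seq R) l : (l < size t)%N ->
  Sm (drop l t) <= ((ln (2 : R)) ^- l)%:E * Sm t.
Proof.
move=> lt.
have s0 : (0 < size (drop l t))%N by rewrite size_drop subn_gt0.
have stl : size (take l t) = l by rewrite size_takel // ltnW.
set c := (ln (2 : R)) ^- l.
have c0 : (0 <= c)%R by rewrite invr_ge0 exprn_ge0 // ltW // ln2_gt0.
have cl : (c * (ln (2 : R)) ^+ l = 1)%R by rewrite mulVf // expf_neq0 // gt_eqF // ln2_gt0.
apply: (@le_trans _ _ (\esum_(a in Pstar_m (drop l t)) (c%:E * Sm_term (refine_head (take l t) a)))).
  apply: le_esum => a Pa; have [h0 sa] := Pstar_m_head_gt0 s0 Pa.
  rewrite /Sm_term prod_refine_head //.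
  have -> : Lm R a = c%:E * ((ln 2 ^+ l)%:E * Lm R a) by rewrite muleA -EFinM cl mul1e.
  rewrite -muleA; apply: lee_wpmul2l; first by rewrite lee_fin.
  apply: lee_wpmul2r; first by rewrite lee_fin invr_ge0 ler0n.
  by rewrite -[in X in X <= _]stl; exact: Lm_refine_head.
apply: le_trans (ge0_esumZl_le _ c0 (fun a => Sm_term_ge0 _)) _.
apply: lee_wpmul2l; first by rewrite lee_fin.
rewrite -(@reindex_esum R _ _ _ (refine_head (take l t) @` Pstar_m (drop l t))); last first.
  apply: inj_bij => a b /set_mem Pa /set_mem Pb.
  have [ha sa] := Pstar_m_head_gt0 s0 Pa; have [hb sb] := Pstar_m_head_gt0 s0 Pb.
  exact: refine_head_inj.
by apply: le_esum_subset => _ [a Pa <-]; exact: Pstar_m_refine_head.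
Qed.

End Sm_drop.

Section squarefree_reciprocals.
Local Close Scope classical_set_scope.
Variable R : realType.

Lemma ln_le_harmonic N : ln (N.+1%:R : R) <= \sum_(1 <= i < N.+1) (i%:R)^-1.
Proof.
elim: N => [|N IH]; first by rewrite ln1 big_geq.
rewrite big_nat_recr //=.
have -> : (N.+2%:R : R) = N.+1%:R * (1 + (N.+1%:R)^-1).
  by rewrite mulrDr mulr1 mulfV // -natr1 addrC.
rewrite lnM ?posrE ?addr_gt0 ?invr_gt0 ?ltr0n //.
apply: lerD => //; apply: le_ln1Dx.
by apply: lt_le_trans (_ : -1 < 0) _; rewrite ?ltrN10 ?invr_ge0 ?ler0n.
Qed.

(* [1/m^2 <= 1/(m-1) - 1/m] telescopes. *)
Lemma sum_inv_sqr_le N :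
  \sum_(1 <= m < N.+2) ((m%:R : R) ^+ 2)^-1 <= 2 - (N.+1%:R)^-1.
Proof.
elim: N => [|N IH]; first by rewrite big_nat1 expr1n invr1; lra.
rewrite big_nat_recr //=; apply: le_trans (lerD IH (lexx _)) _.
rewrite -[N.+2%:R]natr1 -[N.+1%:R]natr1.
have x0 : 0 <= (N%:R : R) by rewrite ler0n.
rewrite -subr_ge0.
have -> : 2 - (N%:R + 1 + 1)^-1 - (2 - (N%:R + 1)^-1 + ((N%:R + 1 + 1) ^+ 2)^-1) =
    ((N%:R + 1) * (N%:R + 1 + 1) ^+ 2)^-1 :> R by field; lra.
by rewrite invr_ge0 mulr_ge0 // ?exprn_ge0 //; lra.
Qed.

Lemma sum_inv_sqr_le2 N : \sum_(1 <= m < N.+1) ((m%:R : R) ^+ 2)^-1 <= 2.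
Proof.
case: N => [|N]; first by rewrite big_geq.
by apply: le_trans (sum_inv_sqr_le N) _; rewrite lerBlDr lerDl invr_ge0 ler0n.
Qed.

Lemma harmonic_le_squarefree_mul N :
  \sum_(1 <= n < N.+1) (n%:R : R)^-1 <=
  (\sum_(s < N.+1 | squarefree s) (s%:R : R)^-1) *
  (\sum_(1 <= m < N.+1) ((m%:R : R) ^+ 2)^-1).
Proof.
rewrite !big_geq_mkord /=.
pose P (p : 'I_N.+1 * 'I_N.+1) := squarefree p.1 && (0 < p.2)%N.
pose g (p : 'I_N.+1 * 'I_N.+1) : R := ((p.1 * p.2 ^ 2)%N%:R)^-1.
have -> : (\sum_(s < N.+1 | squarefree s) (s%:R : R)^-1) *
    (\sum_(m < N.+1 | (0 < m)%N) ((m%:R : R) ^+ 2)^-1) = \sum_(p | P p) g p.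
  rewrite big_distrl /=; under eq_bigr do rewrite big_distrr /=.
  by rewrite pair_big; apply: eq_bigr => -[s m] _; rewrite /g /= natrM natrX [RHS]invfM.
pose phi (n : 'I_N.+1) := odflt (ord0, ord0) [pick p | P p && (p.1 * p.2 ^ 2 == n)%N].
have phiP (n : 'I_N.+1) : (0 < n)%N -> P (phi n) && ((phi n).1 * (phi n).2 ^ 2 == n)%N.
  move=> n0; rewrite /phi; case: pickP => [p Hp | nop] //=; exfalso.
  have [s [m [ss m0 E]]] := squarefree_decomp n0.
  have s0 : (0 < s)%N by case/andP: ss.
  have sN : (s < N.+1)%N by apply: leq_ltn_trans (ltn_ord n); rewrite E; nia.
  have mN : (m < N.+1)%N by apply: leq_ltn_trans (ltn_ord n); rewrite E; nia.
  by have := nop (Ordinal sN, Ordinal mN); rewrite /P /= ss m0 -E eqxx.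
pose A := [set n : 'I_N.+1 | (0 < n)%N].
have phi_inj : {in A &, injective phi}.
  move=> a b; rewrite !inE => a0 b0 ab.
  have /andP [_ /eqP Ea] := phiP a a0; have /andP [_ /eqP Eb] := phiP b b0.
  by apply: val_inj; rewrite /= -Ea -Eb ab.
rewrite (eq_bigr (g \o phi)); last first.
  by move=> n n0; have /andP [_ /eqP En] := phiP n n0; rewrite /g /= En.
rewrite (eq_bigl [in A]) => [|n]; last by rewrite inE.
rewrite -(big_imset _ phi_inj) /= [X in _ <= X](bigID [in phi @: A]) /=.
rewrite [X in _ <= X + _](eq_bigl [in phi @: A]) => [|p].
  by rewrite lerDl sumr_ge0 // => p _; rewrite invr_ge0 ler0n.
apply/andb_idl => /imsetP [n]; rewrite inE => n0 ->.
by case/andP: (phiP n n0).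
Qed.

Lemma ln_le_sum_squarefree N :
  ln (N.+1%:R : R) <= 2 * \sum_(s < N.+1 | squarefree s) (s%:R : R)^-1.
Proof.
have Q0 : 0 <= \sum_(s < N.+1 | squarefree s) (s%:R : R)^-1.
  by apply: sumr_ge0 => i _; rewrite invr_ge0 ler0n.
apply: le_trans (ln_le_harmonic N) _; apply: le_trans (harmonic_le_squarefree_mul N) _.
by rewrite mulrC ler_wpM2r // sum_inv_sqr_le2.
Qed.

End squarefree_reciprocals.

Section Sm_seq1.
Local Open Scope ereal_scope.
Variable R : realType.

Lemma Lm_seq1_ge n : (ln (2 : R))%:E <= Lm R [:: n].
Proof.
have L0 : Lset (R := R) [::] [::] by split => //; exists [::].
have -> : (ln (2 : R))%:E = ((ln (2 : R)) ^+ 1)%:E * vol 0 (Lset (R := R) [::]).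
  by rewrite /= expr1; case: pselect => [?|/(_ L0) //]; rewrite mule1.
rewrite -(vol_cyl 1 0 _ (measurable_itv _) (lebesgue_measure_ln2_itv R)).
by apply: le_vol => v; apply: cyl_Lset_sub.
Qed.

Lemma Sm_seq1_ge (x : R) : (1 <= x)%R -> (ln (2 : R) / 2 * ln x)%:E <= Sm [:: x].
Proof.
move=> x1; set N := Num.truncn x.
have x0 : (0 <= x)%R by apply: le_trans x1; exact: ler01.
have Nx : (N%:R <= x)%R by rewrite truncn_le.
set Q := (\sum_(s < N.+1 | squarefree s) (s%:R : R)^-1)%R.
have lnxQ : (ln 2 / 2 * ln x <= ln 2 * Q)%R.
  have : (ln x <= 2 * Q)%R.
    apply: le_trans (ln_le_sum_squarefree R N).
    rewrite ler_ln ?posrE ?ltr0n ?ltW ?(lt_le_trans ltr01 x1) //.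
    by rewrite -truncn_le_nat.
  by have := ln2_gt0 R; nra.
apply: le_trans (_ : (ln 2 * Q)%:E <= _); first by rewrite lee_fin.
have seq1_Pstar_m : (fun s => [:: s]) @` [set s | Pstar 1 x s] `<=` Pstar_m [:: x].
  by move=> _ [s Ps <-]; split => // -[|i].
apply: le_trans (le_esum_subset _ seq1_Pstar_m).
rewrite (@reindex_esum R _ _ [set s | Pstar 1 x s] _ (fun s : nat => [:: s])); last first.
  by apply: inj_bij => a b _ _ [].
rewrite -nneseries_esum; last by move=> n _; exact: Sm_term_ge0.
apply: le_trans (nneseries_lim_ge N.+1 _); last by move=> n _ _; exact: Sm_term_ge0.
rewrite big_mkord /Q mulr_sumr -sumEFin big_mkcond [leRHS]big_mkcond /=.
apply: lee_sum => s _; case: ifP => sq; last by case: ifP => // _; exact: Sm_term_ge0.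
have Ps : Pstar 1 x s.
  rewrite /Pstar sq /=; apply/allP => p; rewrite mem_primes => /and3P [pp s0 ps].
  rewrite ltr1n prime_gt1 //= (le_trans _ Nx) // ler_nat.
  by apply: leq_trans (dvdn_leq s0 ps) _; rewrite -ltnS ltn_ord.
rewrite Ps /Sm_term big_seq1 EFinM.
by apply: lee_wpmul2r; [rewrite lee_fin invr_ge0 ler0n | exact: Lm_seq1_ge].
Qed.

End Sm_seq1.

Theorem lemma3p8 (R : realType) :
  (forall (k l : nat) (t : seq R),
     size t = k -> (1 <= l <= k - 1)%N ->
     all (fun x => 3 <= x) t -> sorted <=%R t ->
     (Sm (drop l t) <= ((ln (2 : R)) ^- l)%:E * Sm t)%E)
  /\
  (forall k : nat, (2 <= k)%N ->
     exists C : R, 0 < C /\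
       forall t : seq R, size t = k ->
         all (fun x => 3 <= x) t -> sorted <=%R t ->
         ((C * ln (last 0 t))%:E <= Sm t)%E).
Proof.
split=> [k l t <- /andP [l1 lk] _ _ | k k2]; first by apply: Sm_drop_le; lia.
have l2 := ln2_gt0 R.
exists ((ln (2 : R)) ^+ (k - 1) * (ln 2 / 2)); split.
  by rewrite mulr_gt0 ?exprn_gt0 ?divr_gt0.
case/lastP => [|s y]; first by move=> k0; move: k2; rewrite -k0.
rewrite size_rcons last_rcons => sk /allP t3 _.
have y1 : 1 <= y by have := t3 y; rewrite mem_rcons mem_head => /(_ isT); lra.
have -> : (k - 1 = size s)%N by lia.
have := @Sm_drop_le R (rcons s y) (size s); rewrite size_rcons ltnSn.
rewrite -cats1 drop_size_cat // cats1 => /(_ isT) Sdrop.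
have c0 : (0 <= (ln (2 : R) ^+ size s)%:E)%E by rewrite lee_fin exprn_ge0 ?ltW.
rewrite -mulrA EFinM; apply: le_trans (lee_wpmul2l c0 (Sm_seq1_ge y1)) _.
apply: le_trans (lee_wpmul2l c0 Sdrop) _.
by rewrite muleA -EFinM mulfV ?mul1e // expf_neq0 // gt_eqF.
Qed.
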